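(* Let $p$ be an odd prime. For every integer $0<s<p-1$, the polynomial $b_{1,s}(\alpha)\in\mathbb F_p[\alpha]$ satisfies \[ b_{1,s}(\alpha)\cdot b_{1,s}(-\alpha)=1-\alpha^{p-1}. \] In particular, $b_{1,s}(\alpha)$ has degree $(p-1)/2$ and factorizes into a product of distinct linear factors in $\mathbb F_p[\alpha]$.
   Context: $\mathbb F_p$ is the field of $p$ elements, $\alpha$ an indeterminate, $\binom{x}{m}=x(x-1)\cdots(x-m+1)/m!$. For integers $0<r,s<p$ (interpreted as elements of $\mathbb F_p$), $b_{r,s}(\alpha)=\sum_{k=0}^{p-1}(-r/s)^k\binom{r\alpha-1}{p-1-k}\binom{s\alpha-1}{k}\in\mathbb F_p[\alpha]$. *)

From HB Require Import structures.
From mathcomp Require Import all_boot all_order all_algebra.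
Set Implicit Arguments. Unset Strict Implicit. Unset Printing Implicit Defensive.
Import GRing.Theory.
Local Open Scope ring_scope.

Definition pbinom (F : fieldType) (x : {poly F}) (m : nat) : {poly F} :=
  (m`!%:R)^-1 *: \prod_(i < m) (x - (i%:R)%:P).

Definition b_poly (F : fieldType) (p : nat) (r s : F) : {poly F} :=
  \sum_(k < p) ((- r / s) ^+ k) *:
     (pbinom (r *: 'X - 1) (p.-1 - k) * pbinom (s *: 'X - 1) k).

From HB Require Import structures.
From mathcomp Require Import all_boot all_order all_algebra finfield.
From mathcomp Require Import ring zify.
Import GRing.Theory.
Set Implicit Arguments.
Unset Strict Implicit.
Unset Printing Implicit Defensive.
Local Open Scope ring_scope.

(* Put t = -1/s, so that t s = -1, and let b_m be the m-th partial sum of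
   b_{1,s}, so that b_{1,s} = b_{p-1}.  For a in F_p let M, N be natural
   numbers representing s a - 1 and a - 1; then b_m(a) is the coefficient of
   X^m in G = (1 + tX)^M (1 + X)^N.
   - (1 + X)(1 + tX) G' = (N (1 + tX) + t M (1 + X)) G yields a three-term
     recurrence for the b_m in which, thanks to t s = -1, the degree only
     grows every other step: deg b_m <= m/2.
   - If val a + val (s a) < p, then deg G < p - 1 and b_{p-1}(a) = 0.  For
     every unit a exactly one of a, -a has this property, since
     val a + val (s a) = p would force (1 + s) a = 0.
   Hence b_{1,s} = c * prod_(a in S) (X - a) with S u -S = F_p^*, so
   b(X) b(-X) = k (X^(p-1) - 1), and b(0) = sum_(k < p) t^k = 1 gives k = -1. *)

Lemma comp_polyN_prod_XsubC (R : comNzRingType) (rs : seq R) :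
  (\prod_(a <- rs) ('X - a%:P)) \Po (- 'X) =
  (-1) ^+ size rs * \prod_(a <- rs) ('X + a%:P).
Proof.
elim: rs => [|x rs IH]; first by rewrite !big_nil -polyC1 comp_polyC mul1r.
rewrite !big_cons comp_polyM IH comp_polyB comp_polyX comp_polyC exprS /=; ring.
Qed.

Lemma finField_poly_eq (F : finFieldType) (q r : {poly F}) :
  (size q <= #|F|)%N -> (size r <= #|F|)%N -> (forall a, q.[a] = r.[a]) -> q = r.
Proof.
move=> szq szr qr; apply/eqP; rewrite -subr_eq0; apply/eqP.
apply: (@roots_geq_poly_eq0 _ _ (enum F)); rewrite ?enum_uniq -?cardE //.
  by apply/allP => a _; rewrite /root hornerD hornerN qr subrr.
by rewrite (leq_trans (size_polyD _ _)) // size_polyN geq_max szq szr.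
Qed.

Lemma sum_expr_card (F : finFieldType) (t : F) :
  t != 1 -> \sum_(k < #|F|) t ^+ k = 1.
Proof.
move=> t_neq1; apply: (mulfI (x := t - 1)); first by rewrite subr_eq0.
by rewrite -subrX1 expf_card mulr1.
Qed.

Lemma card_finField_pred_gt0 (F : finFieldType) : (0 < #|F|.-1)%N.
Proof.
by rewrite -subn1 subn_gt0; apply/card_gt1P; exists 0, 1; rewrite !inE eq_sym oner_neq0.
Qed.

Lemma prod_XsubC_units (F : finFieldType) :
  \prod_(a : F | a != 0) ('X - a%:P) = 'X^(#|F|.-1) - 1.
Proof.
apply: (mulfI (x := 'X)); first by rewrite polyX_eq0.
have card_gt0 : (0 < #|F|)%N by apply/card_gt0P; exists 0.
rewrite mulrBr mulr1 -exprS prednK // finField_genPoly.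
by rewrite [RHS](bigD1 0) //= polyC0 subr0.
Qed.

Lemma all_roots_prod_XsubC_leq (R : idomainType) (b : {poly R}) rs :
  b != 0 -> (size b <= (size rs).+1)%N -> all (root b) rs -> uniq_roots rs ->
  b = lead_coef b *: \prod_(z <- rs) ('X - z%:P).
Proof.
move=> b_neq0 szb rootsb urs; apply: all_roots_prod_XsubC => //.
by apply/eqP; rewrite eqn_leq szb (max_ring_poly_roots b_neq0).
Qed.

Section HalfUnits.
Variables (F : finFieldType) (P : pred F).
Hypotheses (notP0 : ~~ P 0) (PN : forall a, a != 0 -> P (- a) = ~~ P a).

Let S := [seq a <- enum F | P a].

Lemma perm_half_units :
  perm_eq (S ++ map -%R S) [seq a <- index_enum F | a != 0].
Proof.
have memS a : (a \in S) = P a by rewrite mem_filter mem_enum andbT.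
have memNS a : (a \in map -%R S) = P (- a).
  by rewrite -[in LHS](opprK a) (mem_map oppr_inj) memS.
have uniqS : uniq S by rewrite filter_uniq ?enum_uniq.
apply: uniq_perm; last 1 first.
- move=> a; rewrite mem_cat memNS memS mem_filter mem_index_enum andbT.
  by have [-> | a0] := eqVneq a 0; rewrite ?oppr0 ?(negPf notP0) // PN // orbN.
- rewrite cat_uniq uniqS (map_inj_uniq oppr_inj) uniqS andbT /=.
  apply/hasPn => a; rewrite memNS memS.
  by have [-> | a0] := eqVneq a 0; rewrite ?oppr0 // PN // negbK.
- by rewrite filter_uniq ?index_enum_uniq.
Qed.

Lemma prod_XsubC_half_units :
  \prod_(a <- S) ('X - a%:P) * \prod_(a <- S) ('X + a%:P) = 'X^(#|F|.-1) - 1.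
Proof.
transitivity (\prod_(a <- S ++ map -%R S) ('X - a%:P)).
  by rewrite big_cat big_map; under [X in _ = _ * X]eq_bigr do rewrite polyCN opprK.
by rewrite (perm_big _ perm_half_units) big_filter prod_XsubC_units.
Qed.

Lemma size_half_units : (size S).*2 = #|F|.-1.
Proof.
have := congr1 (fun q : {poly F} => size q) (esym (prod_XsubC_units F)).
rewrite -big_filter -(perm_big _ perm_half_units) size_prod_XsubC -polyC1 size_XnsubC.
  by rewrite size_cat size_map addnn => -[].
exact: card_finField_pred_gt0.
Qed.

Lemma mul_comp_polyN_half_units (b : {poly F}) c :
  b = c *: \prod_(a <- S) ('X - a%:P) -> b.[0] = 1 ->
  b * (b \Po - 'X) = 1 - 'X^(#|F|.-1).
Proof.
move=> def_b b0; set k := c * c * (-1) ^+ size S.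
have bbN : b * (b \Po - 'X) = k *: ('X^(#|F|.-1) - 1).
  rewrite -prod_XsubC_half_units def_b comp_polyZ comp_polyN_prod_XsubC.
  by rewrite -!mul_polyC !polyCM rmorphXn rmorphN1; ring.
have k_eqN1 : k = -1.
  have := congr1 (horner^~ 0) bbN.
  rewrite /= hornerM horner_comp !hornerE b0 oppr0 b0 mul1r expr0n.
  rewrite gtn_eqF ?card_finField_pred_gt0 //= sub0r mulrN1.
  by move/eqP; rewrite eq_sym eqr_oppLR => /eqP.
by rewrite bbN k_eqN1 scaleN1r opprB.
Qed.

End HalfUnits.

Lemma prod_natr_ffact (R : pzRingType) n j :
  \prod_(i < j) (n%:R - i%:R) = (n ^_ j)%:R :> R.
Proof.
elim: j => [|j IH]; first by rewrite big_ord0 ffactn0.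
rewrite big_ord_recr /= IH ffactnSr natrM.
have [le_jn | lt_nj] := ssrnat.leqP j n; first by rewrite natrB.
by rewrite ffact_small // mulr0n !mul0r.
Qed.

Section BinomialPolynomial.
Variable F : fieldType.
Implicit Types (q : {poly F}) (a : F).

Lemma pbinom0 q : pbinom q 0 = 1.
Proof. by rewrite /pbinom big_ord0 fact0 invr1 scale1r. Qed.

Lemma pbinom1 q : pbinom q 1 = q.
Proof. by rewrite /pbinom big_ord1 invr1 scale1r subr0. Qed.

Lemma size_pbinom_leq q j : (size q <= 2)%N -> (size (pbinom q j) <= j.+1)%N.
Proof.
move=> q_le2; rewrite /pbinom (leq_trans (size_scale_leq _ _)) //.
elim: j => [|j IH]; first by rewrite big_ord0 size_poly1.
rewrite big_ord_recr /= (leq_trans (size_polyMleq _ _)) //.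
have : (size (q - (j%:R)%:P)%R <= 2)%N.
  by rewrite (leq_trans (size_polyD _ _)) // geq_max q_le2 size_polyN size_polyC; case: eqP.
by move: IH; case: (size _) => [|m]; case: (size _) => [|n] //=; lia.
Qed.

Lemma horner_pbinom_nat q a n j : j`!%:R != 0 :> F ->
  q.[a] = n%:R -> (pbinom q j).[a] = 'C(n, j)%:R.
Proof.
move=> fact_neq0 qa; rewrite /pbinom hornerZ horner_prod.
under eq_bigr do rewrite hornerD hornerN hornerC qa.
by rewrite prod_natr_ffact -bin_ffact natrM mulrC mulfK.
Qed.

Lemma horner_pbinom_N1 q a j : j`!%:R != 0 :> F ->
  q.[a] = -1 -> (pbinom q j).[a] = (-1) ^+ j.
Proof.
move=> fact_neq0 qa; rewrite /pbinom hornerZ horner_prod.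
under eq_bigr do rewrite hornerD hornerN hornerC qa.
have -> : \prod_(i < j) (-1 - i%:R) = (-1) ^+ j * j`!%:R :> F.
  elim: j {fact_neq0} => [|j IH]; first by rewrite big_ord0 expr0 mul1r fact0.
  rewrite big_ord_recr /= IH factS natrM exprS -[j.+1%:R]natr1; ring.
by rewrite mulrC mulfK.
Qed.

End BinomialPolynomial.

Definition b1_gen {F : fieldType} (t : F) (M N : nat) : {poly F} :=
  (1 + t *: 'X) ^+ M * (1 + 'X) ^+ N.

Section GeneratingFunction.
Variables (F : fieldType) (t : F).

Lemma coef_linear_exp (u : F) M i :
  ((1 + u *: 'X) ^+ M)`_i = u ^+ i * 'C(M, i)%:R.
Proof.
elim: M i => [|M IH] [|i].
- by rewrite expr0 coef1 expr0 mulr1.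
- by rewrite expr0 coef1 bin0n mulr0.
- rewrite exprS mulrDl mul1r -scalerAl coefD coefZ coefXM /= IH.
  by rewrite !bin0 !expr0 mulr0 addr0.
rewrite exprS mulrDl mul1r -scalerAl coefD coefZ coefXM /= !IH binS natrD exprS; ring.
Qed.

Lemma size_linear_exp_leq (u : F) n : (size ((1 + u *: 'X) ^+ n) <= n.+1)%N.
Proof.
have szL : (size (1 + u *: 'X)%R <= 2)%N.
  rewrite (leq_trans (size_polyD _ _)) // size_poly1 geq_max /=.
  by rewrite (leq_trans (size_scale_leq _ _)) ?size_polyX.
rewrite (leq_trans (size_poly_exp_leq _ _)) // ltnS; move: szL.
by case: (size _) => [|[|[|k]]] // _; rewrite /= ?mul0n ?mul1n.
Qed.

Lemma size_b1_gen_leq M N : (size (b1_gen t M N) <= M + N + 1)%N.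
Proof.
have szM := size_linear_exp_leq t M.
have := size_linear_exp_leq 1 N; rewrite scale1r => szN.
rewrite (leq_trans (size_polyMleq _ _)) //.
by move: szM szN; move: (size ((1 + t *: 'X) ^+ M)) (size ((1 + 'X) ^+ N)); lia.
Qed.

Lemma mul_deriv_linear_exp (u : F) n :
  (1 + u *: 'X) * ((1 + u *: 'X) ^+ n)^`() = (u * n%:R) *: (1 + u *: 'X) ^+ n.
Proof.
rewrite deriv_exp derivD derivC derivZ derivX add0r alg_polyC.
case: n => [|n]; first by rewrite !mulr0n mulr0 mulr0 scale0r.
by rewrite -!mul_polyC polyCM polyC_natr -mulr_natl exprS /=; ring.
Qed.

Lemma deriv_b1_gen M N :
  (1 + 'X) * (1 + t *: 'X) * (b1_gen t M N)^`() =
  ((N%:R + t * M%:R)%:P + ((N%:R + M%:R) * t) *: 'X) * b1_gen t M N.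
Proof.
have := mul_deriv_linear_exp t M; have := mul_deriv_linear_exp 1 N.
rewrite /b1_gen derivM scale1r mul1r.
set A : {poly F} := 1 + 'X; set C : {poly F} := 1 + t *: 'X.
set AN : {poly F} := A ^+ N; set CM : {poly F} := C ^+ M.
rewrite -!mul_polyC !polyCM !polyCD => dA dC.
have -> : A * C * (CM^`() * AN + CM * AN^`()) =
          (C * CM^`()) * AN * A + (A * AN^`()) * CM * C by ring.
by rewrite dA dC /A /C -mul_polyC; ring.
Qed.

Lemma coef_b1_gen_rec M N m (G := b1_gen t M N) :
  m.+2%:R * G`_m.+2 + (1 + t) * m.+1%:R * G`_m.+1 + t * m%:R * G`_m =
  (N%:R + t * M%:R) * G`_m.+1 + (N%:R + M%:R) * t * G`_m.
Proof.
have := congr1 (fun P : {poly F} => P`_m.+1) (deriv_b1_gen M N); rewrite -/G.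
have -> : (1 + 'X) * (1 + t *: 'X) * G^`() =
    G^`() + (1 + t) *: (G^`() * 'X) + t *: (G^`() * 'X * 'X).
  by rewrite -!mul_polyC polyCD; ring.
rewrite mulrDl -!scalerAl mul_polyC !coefD !coefZ !coefMX coefXM !coef_deriv /=.
by case: m => [|m] /= <-; rewrite -!mulrA !mulr_natl ?mulr0n ?mulr0.
Qed.

End GeneratingFunction.

(* Partial sums of b_{1,s}, with t standing for -1/s. *)
Definition b1_poly {F : fieldType} (t c : F) (m : nat) : {poly F} :=
  \sum_(k < m.+1) t ^+ k *: (pbinom ('X - 1) (m - k) * pbinom (c *: 'X - 1) k).

Section B1Poly.
Variables (F : fieldType) (t c : F).

Lemma size_scaleX_subC (u v : F) : (size (u *: 'X - v%:P)%R <= 2)%N.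
Proof.
rewrite (leq_trans (size_polyD _ _)) // size_polyN geq_max.
rewrite (leq_trans (size_polyC_leq1 _)) // andbT.
by rewrite (leq_trans (size_scale_leq _ _)) ?size_polyX.
Qed.

Lemma size_b1_poly_leq m : (size (b1_poly t c m) <= m.+1)%N.
Proof.
apply: (big_ind (fun q : {poly F} => size q <= m.+1)%N).
- by rewrite size_poly0.
- by move=> q r szq szr; rewrite (leq_trans (size_polyD _ _)) // geq_max szq szr.
move=> k _; rewrite (leq_trans (size_scale_leq _ _)) // (leq_trans (size_polyMleq _ _)) //.
have := size_pbinom_leq k (size_scaleX_subC c 1).
have := size_pbinom_leq (m - k) (size_scaleX_subC 1 1).
rewrite scale1r polyC1 => szA szC; have := ltn_ord k.
by move: szA szC; case: (size _) => [|x]; case: (size _) => [|y] //=; lia.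
Qed.

Lemma b1_poly0 : b1_poly t c 0 = 1.
Proof. by rewrite /b1_poly big_ord1 /= !pbinom0 mulr1 expr0 scale1r. Qed.

Lemma b1_poly1 : t * c = -1 -> b1_poly t c 1 = (- (1 + t))%:P.
Proof.
move=> tc; rewrite /b1_poly big_ord_recr big_ord1 /= !pbinom0 !pbinom1 mulr1 mul1r.
rewrite expr0 expr1 scale1r scalerBr scalerA tc scaleN1r polyCN polyCD polyC1 -mul_polyC.
ring.
Qed.

End B1Poly.

Section PrimeField.
Variables (p : nat) (hp : prime p).

Lemma natr_Fp_neq0 n : (0 < n < p)%N -> n%:R != 0 :> 'F_p.
Proof.
case/andP=> n_gt0 n_ltp; rewrite -(dvdn_pcharf (pchar_Fp hp)).
by apply/negP => /(dvdn_leq n_gt0); rewrite leqNgt n_ltp.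
Qed.

Lemma fact_Fp_neq0 j : (j < p)%N -> j`!%:R != 0 :> 'F_p.
Proof.
move=> j_ltp; rewrite fact_prod natr_prod prodf_seq_neq0.
apply/allP => i; rewrite mem_index_iota => /andP[i_gt0 i_le].
by apply: natr_Fp_neq0; lia.
Qed.

Lemma Fp_val_lt (a : 'F_p) : (val a < p)%N.
Proof. by have := ltn_ord a; rewrite [X in (_ < X)%N -> _](Fp_cast hp). Qed.

Lemma Fp_val_gt0 (a : 'F_p) : a != 0 -> (0 < val a)%N.
Proof. by rewrite lt0n. Qed.

Lemma natr_Fp_val_pred (a : 'F_p) : a != 0 -> (val a).-1%:R = a - 1.
Proof.
by move=> a0; apply: (addIr 1); rewrite subrK natr1 prednK ?Fp_val_gt0 ?natr_Zp.
Qed.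

Lemma Fp_valN (a : 'F_p) : a != 0 -> (val a + val (- a))%N = p.
Proof.
move=> a0; have /dvdnP[k def_k] : (p %| val a + val (- a))%N.
  by rewrite (dvdn_pcharf (pchar_Fp hp)) natrD !natr_Zp subrr.
have := Fp_val_gt0 a0; have := Fp_val_lt a; have := Fp_val_lt (- a).
by rewrite def_k; case: k def_k => [|[|k]] def_k; nia.
Qed.

Lemma horner_b1_poly (t c a : 'F_p) N M j : (j < p)%N ->
  N%:R = a - 1 -> M%:R = c * a - 1 -> (b1_poly t c j).[a] = (b1_gen t M N)`_j.
Proof.
move=> j_ltp aN caM; rewrite /b1_poly horner_sum coefM; apply: eq_bigr => k _.
have k_le_j : (k <= j)%N by rewrite -ltnS.
have Xa : ('X - 1).[a] = N%:R by rewrite !hornerE aN.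
have cXa : (c *: 'X - 1).[a] = M%:R by rewrite !hornerE caM.
rewrite hornerZ hornerM (horner_pbinom_nat _ Xa) ?(horner_pbinom_nat _ cXa) ?fact_Fp_neq0;
  try lia.
by rewrite -[X in (1 + X) ^+ N]scale1r !coef_linear_exp expr1n mul1r; ring.
Qed.

(* t c = -1 is exactly what removes 'X from the coefficient of
   b1_poly t c m.+1, so that the degree grows only every other step. *)
Lemma b1_poly_rec (t c : 'F_p) m : t * c = -1 -> (m.+2 < p)%N ->
  m.+2%:R *: b1_poly t c m.+2 =
  - ((1 + t) * m.+2%:R) *: b1_poly t c m.+1
  + ((t - 1) *: 'X - (t * m.+2%:R)%:P) * b1_poly t c m.
Proof.
move=> tc m_ltp; apply: finField_poly_eq; rewrite ?card_Fp //.
- by rewrite (leq_trans (size_scale_leq _ _)) // (leq_trans (size_b1_poly_leq _ _ _)).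
- rewrite (leq_trans (size_polyD _ _)) // geq_max; apply/andP; split.
    rewrite (leq_trans (size_scale_leq _ _)) //.
    by rewrite (leq_trans (size_b1_poly_leq _ _ _)) // ltnW.
  rewrite (leq_trans (size_polyMleq _ _)) //.
  have := size_scaleX_subC (t - 1) (t * m.+2%:R); have := size_b1_poly_leq t c m.
  by case: (size _) => [|x]; case: (size _) => [|y] //=; lia.
move=> a; set N := val (a - 1); set M := val (c * a - 1).
have aN : N%:R = a - 1 by rewrite natr_Zp.
have caM : M%:R = c * a - 1 by rewrite natr_Zp.
have tM : t * (c * a - 1) = - a - t by rewrite mulrBr mulrA tc; ring.
have Mt : (a - 1 + (c * a - 1)) * t = (t - 1) * a - t - t.
  by rewrite mulrDl [(c * a - 1) * t]mulrC tM; ring.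
have := coef_b1_gen_rec t M N m; rewrite /=.
rewrite -!(horner_b1_poly _ _ aN caM) ?(ltnW m_ltp) ?(ltnW (ltnW m_ltp)) //.
rewrite aN caM tM Mt => /eqP; rewrite -subr_eq0 => /eqP rec.
apply/eqP; rewrite !hornerE -subr_eq0 -rec -!natr1; apply/eqP; ring.
Qed.

Lemma size_b1_poly (t c : 'F_p) m : t * c = -1 -> (m < p)%N ->
  (size (b1_poly t c m) <= m./2.+1)%N.
Proof.
move=> tc; elim/ltn_ind: m => -[_ _|[_ _|m IH m_ltp]].
- by rewrite b1_poly0 size_poly1.
- by rewrite b1_poly1 // (leq_trans (size_polyC_leq1 _)).
have := congr1 (fun q : {poly 'F_p} => size q) (b1_poly_rec tc m_ltp).
rewrite /= size_scale ?natr_Fp_neq0 // => ->.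
have IH1 := IH m.+1 (ltnSn _) (ltnW m_ltp).
have IH0 := IH m (leqnSn _) (ltnW (ltnW m_ltp)).
rewrite (leq_trans (size_polyD _ _)) // geq_max; apply/andP; split.
  rewrite (leq_trans (size_scale_leq _ _)) // (leq_trans IH1) //.
  by rewrite ltnS -uphalfE uphalf_half; case: odd.
rewrite (leq_trans (size_polyMleq _ _)) //.
move: IH0 (size_scaleX_subC (t - 1) (t * m.+2%:R)).
by case: (size _) => [|x]; case: (size _) => [|y] //=; lia.
Qed.

Lemma root_b1_poly (t c a : 'F_p) j : (j < p)%N -> a != 0 -> c * a != 0 ->
  (val a + val (c * a)%R <= j.+1)%N -> root (b1_poly t c j) a.
Proof.
move=> j_ltp a0 ca0 small.
rewrite /root (horner_b1_poly _ j_ltp (natr_Fp_val_pred a0) (natr_Fp_val_pred ca0)).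
rewrite nth_default // (leq_trans (size_b1_gen_leq _ _ _)) //.
have := Fp_val_gt0 a0; have := Fp_val_gt0 ca0; lia.
Qed.

Lemma horner0_b1_poly (t c : 'F_p) m : (m < p)%N ->
  (b1_poly t c m).[0] = (-1) ^+ m * \sum_(k < m.+1) t ^+ k.
Proof.
move=> m_ltp; rewrite /b1_poly horner_sum mulr_sumr; apply: eq_bigr => k _.
have k_le_m : (k <= m)%N by rewrite -ltnS.
have X0 : ('X - 1).[0] = -1 :> 'F_p by rewrite !hornerE.
have cX0 : (c *: 'X - 1).[0] = -1 by rewrite !hornerE.
rewrite hornerZ hornerM (horner_pbinom_N1 _ X0) ?(horner_pbinom_N1 _ cX0) ?fact_Fp_neq0;
  try lia.
by rewrite -exprD subnK // mulrC.
Qed.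

Lemma horner0_b1_poly_pred (t c : 'F_p) : odd p -> t * c = -1 -> 1 + c != 0 ->
  (b1_poly t c p.-1).[0] = 1.
Proof.
move=> p_odd tc c1; have p_gt0 := prime_gt0 hp.
have t1 : t != 1.
  by apply: contra_neq c1 => t_eq1; move: tc; rewrite t_eq1 mul1r => ->; rewrite addrN.
have even_p1 : odd p.-1 = false by move: p_odd; rewrite -(prednK p_gt0) => /= /negPf.
have := sum_expr_card t1; rewrite card_Fp // => sum_t.
by rewrite horner0_b1_poly ?prednK // sum_t mulr1 -signr_odd even_p1.
Qed.

Lemma Fp_half_units_opp (c a : 'F_p) : a != 0 -> c != 0 -> 1 + c != 0 ->
  (val (- a)%R + val (c * - a)%R < p)%N = ~~ (val a + val (c * a)%R < p)%N.
Proof.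
move=> a0 c0 c1; have ca0 : c * a != 0 by rewrite mulf_neq0.
have sum_neq_p : (val a + val (c * a)%R != p)%N.
  apply: contra_neq (mulf_neq0 c1 a0) => sum_p.
  have := congr1 (GRing.natmul (1 : 'F_p)) sum_p.
  by rewrite natrD !natr_Zp pchar_Fp_0 // mulrDl mul1r.
move: sum_neq_p (Fp_valN a0) (Fp_valN ca0) (Fp_val_lt a) (Fp_val_lt (c * a)).
rewrite mulrN -ltnNge; move: (val a) (val (- a)) (val (c * a)) (val (- (c * a))).
by move=> x y z w /eqP *; apply/idP/idP; lia.
Qed.

End PrimeField.

Lemma b_poly1E (F : fieldType) p (s : F) : (0 < p)%N ->
  b_poly p 1 s = b1_poly (- 1 / s) s p.-1.
Proof.
by move=> p_gt0; rewrite /b_poly /b1_poly prednK //; apply: eq_bigr => k _; rewrite scale1r.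
Qed.

Theorem lemma11 (p : nat) (hp : prime p) (hodd : odd p) (s : nat)
  (hs0 : (0 < s)%N) (hs : (s < p.-1)%N) :
  let b := b_poly p (1 : 'F_p) (s%:R) in
  b * (b \Po (- 'X)) = 1 - 'X^(p.-1)
  /\ size b = ((p.-1)./2).+1
  /\ exists (c : 'F_p) (rs : seq 'F_p),
       c != 0 /\ uniq rs /\ b = c *: \prod_(a <- rs) ('X - a%:P).
Proof.
move=> b; have p_gt0 : (0 < p)%N by lia.
set c : 'F_p := s%:R; set t := - 1 / c.
have c0 : c != 0 by apply: (natr_Fp_neq0 hp); rewrite hs0; lia.
have c1 : 1 + c != 0 by rewrite addrC natr1 natr_Fp_neq0 //; lia.
have tc : t * c = -1 by rewrite mulfVK.
have b_eq : b = b1_poly t c p.-1 by rewrite /b b_poly1E.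
pose P (a : 'F_p) := (a != 0) && (val a + val (c * a)%R < p)%N.
have notP0 : ~~ P 0 by rewrite /P eqxx.
have PN a : a != 0 -> P (- a) = ~~ P a.
  by move=> a0; rewrite /P oppr_eq0 a0 Fp_half_units_opp.
set S := [seq a <- enum 'F_p | P a].
have szS : size S = (p.-1)./2.
  by have := size_half_units notP0 PN; rewrite card_Fp // => <-; rewrite doubleK.
have b0 : b.[0] = 1 by rewrite b_eq horner0_b1_poly_pred.
have b_neq0 : b != 0 by apply: contra_eq_neq b0 => ->; rewrite horner0 eq_sym oner_neq0.
have def_b : b = lead_coef b *: \prod_(a <- S) ('X - a%:P).
  apply: all_roots_prod_XsubC_leq => //.
  - by rewrite szS b_eq size_b1_poly // ltn_predL.
  - apply/allP => a; rewrite mem_filter mem_enum andbT => /andP[a0 small].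
    by rewrite b_eq root_b1_poly ?ltn_predL ?mulf_neq0 ?prednK //; lia.
  - by rewrite uniq_rootsE filter_uniq ?enum_uniq.
split; first by rewrite (mul_comp_polyN_half_units notP0 PN def_b b0) card_Fp.
split; first by rewrite def_b size_scale ?lead_coef_eq0 // size_prod_XsubC szS.
by exists (lead_coef b), S; rewrite lead_coef_eq0 filter_uniq ?enum_uniq.
Qed.
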